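(* Let $0<q<1$. Then \[ \frac{q^{2/3}}{(1+q)[1/3]_{q^{2}}[5/6]_{q^{2}}}-\sum_{n=1}^{\infty}\frac{(1-q^{4n+1})(1/2|q^{2})_{n}^{2}(1/3|q^{2})_{n}(2/3|q^{2})_{n-1}}{(1-q^{2})([n]_{q^{2}}!)^{2}(7/6|q^{2})_{n}(5/6|q^{2})_{n+1}}\,q^{2n} =\frac{[1/6]_{q^{2}}}{[1/3]_{q^{2}}^{2}[1/2]_{q^{2}}}\cdot\frac{(q^{4/3},q^{2/3};q^{2})_{\infty}\,q^{11/12}}{(q^{1/3},q^{5/3};q^{2})_{\infty}\,\pi_{q}}. \]
   Context: Let $0<q<1$ and write $q^{x}=e^{x\log q}$. $(z;q)_\infty=\prod_{k\ge0}(1-zq^k)$, $(z_1,z_2;q)_\infty=(z_1;q)_\infty(z_2;q)_\infty$. $[z]_{q^2}=\frac{1-q^{2z}}{1-q^2}$; for integers $n\ge0$, $(x|q^2)_n=\prod_{k=0}^{n-1}[x+k]_{q^2}$ (empty product $=1$); $[0]_{q^2}!=1$, $[n]_{q^2}!=\prod_{k=1}^n[k]_{q^2}$. $\pi_q=(1-q^2)q^{1/4}\frac{(q^2;q^2)_\infty^2}{(q;q^2)_\infty^2}$. *)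

From Stdlib Require Import Reals.
Open Scope R_scope.

Definition qpow (q x : R) : R := exp (x * ln q).

Definition qnum (q z : R) : R := (1 - qpow q (2 * z)) / (1 - q ^ 2).

Fixpoint qshift (q x : R) (n : nat) : R :=
  match n with
  | O => 1
  | S m => qshift q x m * qnum q (x + INR m)
  end.

Fixpoint qfact (q : R) (n : nat) : R :=
  match n with
  | O => 1
  | S m => qfact q m * qnum q (INR (S m))
  end.

Fixpoint qpoch_part (z b : R) (N : nat) : R :=
  match N with
  | O => 1
  | S m => qpoch_part z b m * (1 - z * b ^ m)
  end.

Definition qpoch_inf_is (z b P : R) : Prop :=
  Un_cv (qpoch_part z b) P.

(* n-th term (n >= 1) of the series *)
Definition term13 (q : R) (n : nat) : R :=
  (1 - q ^ (4 * n + 1)%nat) * (qshift q (1/2) n) ^ 2 * qshift q (1/3) n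
    * qshift q (2/3) (n - 1)%nat
  / ((1 - q ^ 2) * (qfact q n) ^ 2 * qshift q (7/6) n * qshift q (5/6) (n + 1)%nat)
  * q ^ (2 * n)%nat.

From Stdlib Require Import Reals Lra Lia.
From Coquelicot Require Import Coquelicot.
Open Scope R_scope.

(** Put [q = y^3].  Every q-shifted factorial in the summand is a partial
    product of some [(y^k; y^6)_oo], and the summand is the difference
    [G (n-1) - G n] of consecutive values of an explicit ratio [G n]
    ([antidiff13]) of such partial products, with [G 0 = L0].  Hence the
    partial sums are [L0 - G n], and as [n -> oo] the ratio [G n] tends to the
    product side of the identity, since [(z y^6; y^6)_n] tends to
    [(z; y^6)_oo / (1 - z)]. *)

Lemma pow_le_one x n : 0 <= x <= 1 -> x ^ n <= 1.
Proof. intros hx. rewrite <- (pow1 n). apply pow_incr. lra. Qed.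

Lemma pow_in_unit x n : 0 < x < 1 -> (0 < n)%nat -> 0 < x ^ n < 1.
Proof.
  intros hx hn. split; [now apply pow_lt|].
  apply (pow_lt_1_compat x n); [lra | exact hn].
Qed.

Lemma qpoch_part_shift z b N :
  qpoch_part z b (S N) = (1 - z) * qpoch_part (z * b) b N.
Proof.
  induction N as [|N IH]; [simpl; ring|].
  change (qpoch_part z b (S (S N))) with (qpoch_part z b (S N) * (1 - z * b ^ S N)).
  rewrite IH. simpl. ring.
Qed.

Lemma qpoch_part_pos z b N : 0 <= z < 1 -> 0 <= b <= 1 -> 0 < qpoch_part z b N.
Proof.
  intros hz hb. induction N as [|N IH]; simpl; [lra|].
  apply Rmult_lt_0_compat; [exact IH|].
  assert (0 <= b ^ N <= 1) by (split; [now apply pow_le | now apply pow_le_one]).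
  nra.
Qed.

Lemma exp_le_compat x z : x <= z -> exp x <= exp z.
Proof. intros [h | <-]; [left; now apply exp_increasing | lra]. Qed.

(* From [1 + t <= exp t] at [t = u / (1 - u)]. *)
Lemma exp_le_one_minus u : 0 <= u < 1 -> exp (- (u / (1 - u))) <= 1 - u.
Proof.
  intros hu.
  assert (ht : 0 <= u / (1 - u)) by (apply Rdiv_le_0_compat; lra).
  pose proof (exp_ineq1_le (u / (1 - u))) as hexp.
  rewrite exp_Ropp.
  apply Rle_trans with (/ (1 + u / (1 - u))); [apply Rinv_le_contravar; lra|].
  right. field. lra.
Qed.

Lemma exp_le_qpoch_part z b N : 0 <= z < 1 -> 0 < b < 1 ->
  exp (- (z / (1 - z)) * ((1 - b ^ N) / (1 - b))) <= qpoch_part z b N.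
Proof.
  intros hz hb. set (c := z / (1 - z)).
  induction N as [|N IH].
  { simpl. replace (- c * ((1 - 1) / (1 - b))) with 0 by (field; lra).
    rewrite exp_0. lra. }
  assert (hbN : 0 < b ^ N <= 1) by (split; [apply pow_lt | apply pow_le_one]; lra).
  set (u := z * b ^ N).
  assert (hu : 0 <= u <= z) by (unfold u; split; nra).
  assert (hstep : exp (- c * b ^ N) <= 1 - u).
  { eapply Rle_trans; [|apply exp_le_one_minus; lra].
    apply exp_le_compat.
    assert (u / (1 - u) <= c * b ^ N); [|lra].
    unfold c, Rdiv. replace (z * / (1 - z) * b ^ N) with (u * / (1 - z)) by (unfold u; ring).
    apply Rmult_le_compat_l; [lra|]. apply Rinv_le_contravar; lra. }
  replace (- c * ((1 - b ^ S N) / (1 - b)))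
    with (- c * ((1 - b ^ N) / (1 - b)) + - c * b ^ N) by (simpl; field; lra).
  rewrite exp_plus. simpl qpoch_part.
  apply Rmult_le_compat; auto; left; apply exp_pos.
Qed.

Lemma qpoch_inf_pos z b P : 0 <= z < 1 -> 0 < b < 1 -> qpoch_inf_is z b P -> 0 < P.
Proof.
  intros hz hb hP. set (c := z / (1 - z)).
  assert (hc : 0 <= c) by (apply Rdiv_le_0_compat; lra).
  apply Rlt_le_trans with (exp (- c * (1 / (1 - b)))); [apply exp_pos|].
  apply Rle_cv_lim with (Un := fun _ => exp (- c * (1 / (1 - b)))) (Vn := qpoch_part z b); [| |exact hP].
  - intros n. eapply Rle_trans; [|apply exp_le_qpoch_part; auto].
    apply exp_le_compat.
    assert (0 < b ^ n) by (apply pow_lt; lra).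
    assert ((1 - b ^ n) / (1 - b) <= 1 / (1 - b)).
    { apply Rmult_le_compat_r; [left; apply Rinv_0_lt_compat|]; lra. }
    unfold c in *. nra.
  - apply is_lim_seq_Reals, is_lim_seq_const.
Qed.

Lemma qpoch_inf_shift z b P : z <> 1 -> qpoch_inf_is z b P ->
  is_lim_seq (qpoch_part (z * b) b) (P / (1 - z)).
Proof.
  intros hz hP.
  apply is_lim_seq_ext with (fun n => qpoch_part z b (S n) / (1 - z)).
  { intros n. rewrite qpoch_part_shift. field. lra. }
  apply is_lim_seq_div'; [| apply is_lim_seq_const | lra].
  apply (is_lim_seq_incr_1 (qpoch_part z b)).
  now apply is_lim_seq_Reals.
Qed.

Lemma is_lim_seq_sqr (u : nat -> R) (l : R) :
  is_lim_seq u l -> is_lim_seq (fun n => u n ^ 2) (l ^ 2).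
Proof.
  intros hu. apply is_lim_seq_ext with (fun n => u n * u n); [intros n; ring|].
  replace (l ^ 2) with (l * l) by ring. now apply is_lim_seq_mult'.
Qed.

Lemma qpow_pos q x : 0 < qpow q x.
Proof. apply exp_pos. Qed.

Lemma qpow_add q x z : qpow q (x + z) = qpow q x * qpow q z.
Proof. unfold qpow. rewrite <- exp_plus. f_equal. ring. Qed.

Lemma qpow_nat_mul q x k : qpow q (INR k * x) = qpow q x ^ k.
Proof.
  induction k as [|k IH].
  - unfold qpow. simpl. rewrite <- exp_0. f_equal. ring.
  - rewrite S_INR, Rmult_plus_distr_r, Rmult_1_l, qpow_add, IH. simpl. ring.
Qed.

Lemma qpow_pow y m k x : 0 < y -> INR m * x = INR k -> qpow (y ^ m) x = y ^ k.
Proof.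
  intros hy hx. unfold qpow. rewrite ln_pow by exact hy.
  replace (x * (INR m * ln y)) with (INR k * ln y) by (rewrite <- hx; ring).
  rewrite <- ln_pow by exact hy. apply exp_ln, pow_lt, hy.
Qed.

Lemma qshift_qpoch_part q x n : 0 < q < 1 ->
  qshift q x n = qpoch_part (qpow q (2 * x)) (q ^ 2) n / (1 - q ^ 2) ^ n.
Proof.
  intros hq. assert (hq2 : 1 - q ^ 2 <> 0) by nra.
  induction n as [|n IH]; [simpl; field|].
  assert (hpow : qpow q (2 * (x + INR n)) = qpow q (2 * x) * (q ^ 2) ^ n).
  { rewrite Rmult_plus_distr_l, qpow_add, (Rmult_comm 2 (INR n)), qpow_nat_mul.
    rewrite <- (pow_1 q) at 2. rewrite (qpow_pow q 1 2); [ring | lra | simpl; ring]. }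
  cbn [qshift qpoch_part]. rewrite IH. unfold qnum. rewrite hpow, <- (tech_pow_Rmult (1 - q ^ 2) n).
  field. split; [apply pow_nonzero|]; exact hq2.
Qed.

Lemma qfact_qshift q n : qfact q n = qshift q 1 n.
Proof.
  induction n as [|n IH]; [reflexivity|].
  cbn [qfact qshift]. rewrite IH, S_INR, Rplus_comm. reflexivity.
Qed.

Section CubeRootOfQ.

Variable y : R.
Hypothesis hy : 0 < y < 1.

(* With [q = y^3]: [ypoch k n = (q^(k/3); q^2)_n]. *)
Definition ypoch k n := qpoch_part (y ^ k) (y ^ 6) n.

Lemma ypoch_succ k n : ypoch k (S n) = ypoch k n * (1 - y ^ k * (y ^ 6) ^ n).
Proof. reflexivity. Qed.

Lemma ypoch_shift k m n : (k + 6 = m)%nat -> ypoch k (S n) = (1 - y ^ k) * ypoch m n.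
Proof. intros <-. unfold ypoch. now rewrite qpoch_part_shift, pow_add. Qed.

Lemma ypoch_pos k n : (0 < k)%nat -> 0 < ypoch k n.
Proof.
  intros hk. pose proof (pow_in_unit y k hy hk).
  assert (0 < y ^ 6 < 1) by (apply pow_in_unit; [exact hy | lia]).
  apply qpoch_part_pos; lra.
Qed.

Lemma qshift_cube_root x k n : INR k = 6 * x -> qshift (y ^ 3) x n = ypoch k n / (1 - y ^ 6) ^ n.
Proof.
  intros hk. rewrite qshift_qpoch_part by (apply pow_in_unit; [exact hy | lia]).
  rewrite (qpow_pow y 3 k) by (cbn [INR]; lra).
  now replace ((y ^ 3) ^ 2) with (y ^ 6) by ring.
Qed.

Lemma qnum_cube_root x k : INR k = 6 * x -> qnum (y ^ 3) x = (1 - y ^ k) / (1 - y ^ 6).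
Proof.
  intros hk. unfold qnum. rewrite (qpow_pow y 3 k) by (cbn [INR]; lra).
  now replace ((y ^ 3) ^ 2) with (y ^ 6) by ring.
Qed.

Definition lead13 : R :=
  y ^ 2 / ((1 + y ^ 3) * ((1 - y ^ 2) / (1 - y ^ 6)) * ((1 - y ^ 5) / (1 - y ^ 6))).

Definition antidiff13 n : R :=
  lead13 * ypoch 4 n * ypoch 8 n * ypoch 9 n ^ 2 / (ypoch 6 n ^ 2 * ypoch 7 n * ypoch 11 n).

Lemma term13_telescope M : term13 (y ^ 3) (S M) = antidiff13 M - antidiff13 (S M).
Proof.
  unfold term13. rewrite qfact_qshift.
  rewrite (qshift_cube_root (1/2) 3), (qshift_cube_root (1/3) 2), (qshift_cube_root (2/3) 4),
    (qshift_cube_root (7/6) 7), (qshift_cube_root (5/6) 5), (qshift_cube_root 1 6)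
    by (cbn [INR]; lra).
  replace (S M - 1)%nat with M by lia. replace (S M + 1)%nat with (S (S M)) by lia.
  rewrite (ypoch_shift 3 9), (ypoch_shift 2 8), (ypoch_shift 5 11 (S M)) by lia.
  unfold antidiff13. rewrite !ypoch_succ.
  set (Z := (y ^ 6) ^ M).
  replace ((y ^ 3) ^ (4 * S M + 1)) with (y ^ 15 * Z ^ 2)
    by (unfold Z; rewrite <- !pow_mult, <- !pow_add; f_equal; lia).
  replace ((y ^ 3) ^ (2 * S M)) with (y ^ 6 * Z)
    by (unfold Z; rewrite <- !pow_mult, <- !pow_add; f_equal; lia).
  replace ((y ^ 3) ^ 2) with (y ^ 6) by ring.
  rewrite <- (tech_pow_Rmult (1 - y ^ 6) (S M)), <- (tech_pow_Rmult (1 - y ^ 6) M).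
  assert (hZ : 0 < Z <= 1).
  { assert (0 < y ^ 6 < 1) by (apply pow_in_unit; [exact hy | lia]).
    split; [apply pow_lt | apply pow_le_one]; lra. }
  pose proof (ypoch_pos 4 M ltac:(lia)) as p4. pose proof (ypoch_pos 8 M ltac:(lia)) as p8.
  pose proof (ypoch_pos 9 M ltac:(lia)) as p9. pose proof (ypoch_pos 6 M ltac:(lia)) as p6.
  pose proof (ypoch_pos 7 M ltac:(lia)) as p7. pose proof (ypoch_pos 11 M ltac:(lia)) as p11.
  pose proof (pow_in_unit y 2 hy ltac:(lia)) as y2. pose proof (pow_in_unit y 3 hy ltac:(lia)) as y3.
  pose proof (pow_in_unit y 5 hy ltac:(lia)) as y5. pose proof (pow_in_unit y 6 hy ltac:(lia)) as y6.
  pose proof (pow_in_unit y 7 hy ltac:(lia)) as y7. pose proof (pow_in_unit y 11 hy ltac:(lia)) as y11.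
  pose proof (pow_lt (1 - y ^ 6) M ltac:(lra)) as v.
  unfold lead13. field. repeat split; nra.
Qed.

Lemma lead13_closed_form :
  lead13 = qpow (y ^ 3) (2/3) / ((1 + y ^ 3) * qnum (y ^ 3) (1/3) * qnum (y ^ 3) (5/6)).
Proof.
  rewrite (qnum_cube_root (1/3) 2), (qnum_cube_root (5/6) 5), (qpow_pow y 3 2)
    by (cbn [INR]; lra).
  reflexivity.
Qed.

Lemma antidiff13_0 : antidiff13 0 = lead13.
Proof. unfold antidiff13, ypoch. simpl. field. Qed.

Lemma sum_term13 n :
  sum_f_R0 (fun k => term13 (y ^ 3) (S k)) n = lead13 - antidiff13 (S n).
Proof.
  induction n as [|n IH].
  - cbn [sum_f_R0]. rewrite term13_telescope, antidiff13_0. ring.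
  - rewrite tech5, IH, term13_telescope. ring.
Qed.

Lemma ypoch_lim_shift k m P : (0 < k)%nat -> (k + 6 = m)%nat ->
  qpoch_inf_is (y ^ k) (y ^ 6) P -> is_lim_seq (ypoch m) (P / (1 - y ^ k)).
Proof.
  intros hk <- hP. pose proof (pow_in_unit y k hy hk).
  unfold ypoch. rewrite pow_add. apply qpoch_inf_shift; [lra | exact hP].
Qed.

Lemma ypoch_inf_pos k P : (0 < k)%nat -> qpoch_inf_is (y ^ k) (y ^ 6) P -> 0 < P.
Proof.
  intros hk hP. pose proof (pow_in_unit y k hy hk).
  assert (0 < y ^ 6 < 1) by (apply pow_in_unit; [exact hy | lia]).
  apply (qpoch_inf_pos (y ^ k) (y ^ 6)); [lra | lra | exact hP].
Qed.

Section Limit.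

Variables A B C D E F : R.
Hypothesis hA : qpoch_inf_is (y ^ 6) (y ^ 6) A.
Hypothesis hB : qpoch_inf_is (y ^ 3) (y ^ 6) B.
Hypothesis hC : qpoch_inf_is (y ^ 4) (y ^ 6) C.
Hypothesis hD : qpoch_inf_is (y ^ 2) (y ^ 6) D.
Hypothesis hE : qpoch_inf_is (y ^ 1) (y ^ 6) E.
Hypothesis hF : qpoch_inf_is (y ^ 5) (y ^ 6) F.

Definition antidiff13_lim : R :=
  lead13 * C * (D / (1 - y ^ 2)) * (B / (1 - y ^ 3)) ^ 2
  / (A ^ 2 * (E / (1 - y ^ 1)) * (F / (1 - y ^ 5))).

Lemma antidiff13_cv : is_lim_seq antidiff13 antidiff13_lim.
Proof.
  assert (y1 : 0 < y ^ 1 < 1) by (apply pow_in_unit; [exact hy | lia]).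
  assert (y5 : 0 < y ^ 5 < 1) by (apply pow_in_unit; [exact hy | lia]).
  pose proof (ypoch_inf_pos 6 A ltac:(lia) hA) as pA.
  pose proof (ypoch_inf_pos 1 E ltac:(lia) hE) as pE.
  pose proof (ypoch_inf_pos 5 F ltac:(lia) hF) as pF.
  unfold antidiff13, antidiff13_lim.
  apply is_lim_seq_div'.
  - apply is_lim_seq_mult'; [apply is_lim_seq_mult'; [apply is_lim_seq_mult'|] | apply is_lim_seq_sqr].
    + apply is_lim_seq_const.
    + now apply is_lim_seq_Reals.
    + apply (ypoch_lim_shift 2); [lia | lia | exact hD].
    + apply (ypoch_lim_shift 3); [lia | lia | exact hB].
  - apply is_lim_seq_mult'; [apply is_lim_seq_mult'; [apply is_lim_seq_sqr|] |].
    + now apply is_lim_seq_Reals.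
    + apply (ypoch_lim_shift 1); [lia | lia | exact hE].
    + apply (ypoch_lim_shift 5); [lia | lia | exact hF].
  - assert (0 < E / (1 - y ^ 1)) by (apply Rdiv_lt_0_compat; lra).
    assert (0 < F / (1 - y ^ 5)) by (apply Rdiv_lt_0_compat; lra).
    assert (0 < A ^ 2) by (apply pow_lt; lra).
    apply Rgt_not_eq. apply Rmult_lt_0_compat; [apply Rmult_lt_0_compat|]; assumption.
Qed.

Lemma antidiff13_lim_closed_form :
  antidiff13_lim =
  qnum (y ^ 3) (1/6) / (qnum (y ^ 3) (1/3) ^ 2 * qnum (y ^ 3) (1/2))
  * (C * D * qpow (y ^ 3) (11/12)
     / (E * F * ((1 - (y ^ 3) ^ 2) * qpow (y ^ 3) (1/4) * A ^ 2 / B ^ 2))).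
Proof.
  rewrite (qnum_cube_root (1/6) 1), (qnum_cube_root (1/3) 2), (qnum_cube_root (1/2) 3)
    by (cbn [INR]; lra).
  replace (11/12) with (1/4 + 2/3) by field.
  rewrite qpow_add, (qpow_pow y 3 2 (2/3)) by (cbn [INR]; lra).
  replace ((y ^ 3) ^ 2) with (y ^ 6) by ring.
  pose proof (ypoch_inf_pos 6 A ltac:(lia) hA) as pA.
  pose proof (ypoch_inf_pos 3 B ltac:(lia) hB) as pB.
  pose proof (ypoch_inf_pos 1 E ltac:(lia) hE) as pE.
  pose proof (ypoch_inf_pos 5 F ltac:(lia) hF) as pF.
  pose proof (qpow_pos (y ^ 3) (1/4)) as pw.
  pose proof (pow_in_unit y 2 hy ltac:(lia)) as y2.
  pose proof (pow_in_unit y 3 hy ltac:(lia)) as y3.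
  pose proof (pow_in_unit y 5 hy ltac:(lia)) as y5.
  pose proof (pow_in_unit y 6 hy ltac:(lia)) as y6.
  unfold antidiff13_lim, lead13. field. repeat split; lra.
Qed.

Lemma infinite_sum_term13 :
  infinite_sum (fun k => term13 (y ^ 3) (S k)) (lead13 - antidiff13_lim).
Proof.
  unfold infinite_sum. apply Un_cv_ext with (fun n => lead13 - antidiff13 (S n)).
  { intros n. symmetry. apply sum_term13. }
  apply is_lim_seq_Reals, is_lim_seq_minus'; [apply is_lim_seq_const|].
  apply (is_lim_seq_incr_1 antidiff13), antidiff13_cv.
Qed.

End Limit.

End CubeRootOfQ.

Lemma cube_root_in_unit q : 0 < q < 1 -> exists y, 0 < y < 1 /\ q = y ^ 3.
Proof.
  intros hq. exists (qpow q (1/3)). split; [split|].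
  - apply qpow_pos.
  - assert (ln q < 0) by (rewrite <- ln_1; apply ln_increasing; lra).
    assert (h : exp (1/3 * ln q) < exp 0) by (apply exp_increasing; lra).
    now rewrite exp_0 in h.
  - rewrite <- qpow_nat_mul. unfold qpow.
    replace (INR 3 * (1/3) * ln q) with (ln q) by (simpl; field).
    symmetry. apply exp_ln. lra.
Qed.

Theorem mainTheorem13 (q : R) (hq0 : 0 < q) (hq1 : q < 1)
  (A B C D E F : R)
  (hA : qpoch_inf_is (q ^ 2) (q ^ 2) A)        (* (q^2;q^2)_oo *)
  (hB : qpoch_inf_is q (q ^ 2) B)              (* (q;q^2)_oo *)
  (hC : qpoch_inf_is (qpow q (4/3)) (q ^ 2) C)
  (hD : qpoch_inf_is (qpow q (2/3)) (q ^ 2) D)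
  (hE : qpoch_inf_is (qpow q (1/3)) (q ^ 2) E)
  (hF : qpoch_inf_is (qpow q (5/3)) (q ^ 2) F) :
  let piq := (1 - q ^ 2) * qpow q (1/4) * A ^ 2 / B ^ 2 in
  let L0 := qpow q (2/3) / ((1 + q) * qnum q (1/3) * qnum q (5/6)) in
  let RHS := qnum q (1/6) / (qnum q (1/3) ^ 2 * qnum q (1/2))
             * (C * D * qpow q (11/12) / (E * F * piq)) in
  infinite_sum (fun k => term13 q (Datatypes.S k)) (L0 - RHS).
Proof.
  cbv zeta.
  destruct (cube_root_in_unit q (conj hq0 hq1)) as [y [hy ->]].
  rewrite (qpow_pow y 3 4) in hC by (cbn [INR]; lra).
  rewrite (qpow_pow y 3 2) in hD by (cbn [INR]; lra).
  rewrite (qpow_pow y 3 1) in hE by (cbn [INR]; lra).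
  rewrite (qpow_pow y 3 5) in hF by (cbn [INR]; lra).
  replace ((y ^ 3) ^ 2) with (y ^ 6) in hA, hB, hC, hD, hE, hF by ring.
  rewrite <- lead13_closed_form, <- antidiff13_lim_closed_form by assumption.
  now apply infinite_sum_term13.
Qed.
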